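(* Let $q\ge 2$ and $n\ge 1$ be integers and let $\boldsymbol{x}\neq\boldsymbol{y}\in\Sigma_q^n$. Then $d_H(\mathcal{R}(\boldsymbol{x}),\mathcal{R}(\boldsymbol{y}))=2$ if and only if there exist sequences $\boldsymbol{u},\boldsymbol{v}\in\Sigma_q^{\ge 0}$, two distinct symbols $a,b\in\Sigma_q$ and an integer $t\ge 1$ such that $$\boldsymbol{x}=(\boldsymbol{u},\boldsymbol{\alpha}_t(ab),\boldsymbol{v}),\qquad \boldsymbol{y}=(\boldsymbol{u},\boldsymbol{\alpha}_t(ba),\boldsymbol{v}).$$
   Context: $\Sigma_q=\{0,1,\dots,q-1\}$; $\Sigma_q^{\ge 0}$ is the set of all finite sequences over $\Sigma_q$, including the empty one; $(\cdot,\cdot)$ denotes concatenation. For $\boldsymbol{x}\in\Sigma_q^n$, $x[i]$ is its $i$-th entry, with the convention $x[i]=0$ for $i\notin[1,n]$; $\boldsymbol{x}[i,j]=(x[i],\dots,x[j])$. The $2$-read vector of $\boldsymbol{x}$ is $\mathcal{R}(\boldsymbol{x})=(c(\boldsymbol{x}[0,1]),c(\boldsymbol{x}[1,2]),\dots,c(\boldsymbol{x}[n,n+1]))$, a vector of length $n+1$ whose $i$-th entry is the multiset $\{\{x[i-1],x[i]\}\}$. $d_H$ denotes Hamming distance (number of positions where entries differ). For distinct $a,b$ and $t\ge 0$, $\boldsymbol{\alpha}_t(ab)$ is the alternating sequence $abab\cdots$ of length $t$, i.e. $(ab)^{t/2}$ if $t$ is even and $(ab)^{(t-1)/2}a$ if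 $t$ is odd. *)

From mathcomp Require Import all_boot.
Set Implicit Arguments. Unset Strict Implicit. Unset Printing Implicit Defensive.

(* Sigma_q = 'I_q; a sequence over Sigma_q is a seq 'I_q. *)

(* The multiset {{a, b}} of two naturals, represented canonically as the
   sorted list of its elements (two multisets are equal iff these agree). *)
Definition mset2 (a b : nat) : seq nat := sort leq [:: a; b].

Definition padded q (x : seq 'I_q) : seq nat := 0 :: map val x ++ [:: 0].

(* The 2-read vector R(x) : its i-th entry (i = 1..n+1) is {{x[i-1], x[i]}}. *)
Definition read2 q (x : seq 'I_q) : seq (seq nat) :=
  let p := padded x in
  mkseq (fun i => mset2 (nth 0 p i) (nth 0 p i.+1)) (size x).+1.

Definition dH (T : eqType) (s t : seq T) : nat :=
  count (fun pr : T * T => pr.1 != pr.2) (zip s t).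

Definition alpha (T : Type) (t : nat) (a b : T) : seq T :=
  mkseq (fun i => if odd i then b else a) t.

From mathcomp Require Import all_boot zify.
Set Implicit Arguments. Unset Strict Implicit. Unset Printing Implicit Defensive.

(* Given
   previous symbols a <> b of x and y, the next reads {{a, c}} and {{b, d}}
   coincide exactly when (c, d) = (b, a).  So after the first disagreement,
   which costs one read, the reads keep agreeing precisely as long as x and y
   continue as the alternations a b a b ... and b a b a ...; when this pattern
   stops (at the latest at the final read {{., 0}}) a second read differs, and
   a third is avoided only if x and y coincide from there on. *)

Lemma mset2E a b : mset2 a b = if a <= b then [:: a; b] else [:: b; a].
Proof. by rewrite /mset2 /sort /=; case: ifP. Qed.

Lemma mset2C a b : mset2 a b = mset2 b a.
Proof. by rewrite !mset2E; case: ltngtP => [? | ? | ->]. Qed.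

Lemma mset2_eq a b c d :
  mset2 a b = mset2 c d <-> (a = c /\ b = d) \/ (a = d /\ b = c).
Proof.
rewrite !mset2E; split.
- by case: (leqP a b); case: (leqP c d) => ? ? [-> ->]; lia.
- by case=> -[-> ->]; rewrite -!mset2E // mset2C.
Qed.

Lemma eq_mset2l a b c : (mset2 a b == mset2 a c) = (b == c).
Proof.
by apply/eqP/eqP => [/mset2_eq [[_ ->] | [-> ->]] | ->].
Qed.

Lemma eq_mset2r a b c : (mset2 a c == mset2 b c) = (a == b).
Proof. by rewrite mset2C [mset2 b c]mset2C eq_mset2l. Qed.

Lemma mkseqSl (T : Type) (f : nat -> T) n :
  mkseq f n.+1 = f 0 :: mkseq (fun i => f i.+1) n.
Proof. by rewrite /mkseq /= -[1]/(1 + 0) iotaDl -map_comp. Qed.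

Lemma alphaS (T : Type) t (a b : T) : alpha t.+1 a b = a :: alpha t b a.
Proof.
rewrite /alpha mkseqSl; congr (_ :: _); apply: eq_mkseq => i /=.
by case: (odd i).
Qed.

Lemma size_alpha (T : Type) t (a b : T) : size (alpha t a b) = t.
Proof. exact: size_mkseq. Qed.

Lemma dH_cons (T : eqType) (a b : T) s t :
  dH (a :: s) (b :: t) = (a != b) + dH s t.
Proof. by []. Qed.

Lemma dH_eq0 (T : eqType) (s t : seq T) :
  size s = size t -> (dH s t == 0) = (s == t).
Proof.
elim: s t => [|a s IH] [|b t] //= [/IH Est].
by rewrite dH_cons eqseq_cons addn_eq0 eqb0 negbK Est.
Qed.

Section SwappedAlternations.
Variable T : eqType.

Definition alt_swap (a b : T) (x y : seq T) : Prop :=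
  exists t v, x = alpha t a b ++ v /\ y = alpha t b a ++ v.

Definition swap_block (x y : seq T) : Prop :=
  exists (u v : seq T) (a b : T) (t : nat),
    [/\ a != b, 1 <= t, x = u ++ alpha t a b ++ v & y = u ++ alpha t b a ++ v].

Lemma alt_swap_cons a b c d x y :
  alt_swap a b (c :: x) (d :: y) <->
  c :: x = d :: y \/ [/\ c = a, d = b & alt_swap b a x y].
Proof.
split.
- case=> -[|t] [v []]; first by move=> -> ->; left.
  by rewrite !alphaS /= => -[-> ->] [-> ->]; right; split=> //; exists t, v.
- case=> [<- | [-> -> [t [v [-> ->]]]]]; first by exists 0, (c :: x).
  by exists t.+1, v; rewrite !alphaS.
Qed.

Lemma swap_block_nil : ~ swap_block [::] [::].
Proof.
case=> u [v [a [b [t [_ t_gt0 _ /(congr1 size)]]]]].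
by rewrite !size_cat size_alpha /=; lia.
Qed.

Lemma swap_block_cons_eq c x y : swap_block (c :: x) (c :: y) <-> swap_block x y.
Proof.
split.
- case=> -[|e u] [v [a [b [t [ab t_gt0]]]]] /=; last first.
    by case=> _ -> [_ ->]; exists u, v, a, b, t.
  by rewrite -(prednK t_gt0) !alphaS => -[-> _] [ca _]; rewrite ca eqxx in ab.
- by case=> u [v [a [b [t [ab t_gt0 -> ->]]]]]; exists (c :: u), v, a, b, t.
Qed.

Lemma swap_block_cons_neq c d x y :
  c != d -> swap_block (c :: x) (d :: y) <-> alt_swap d c x y.
Proof.
move=> cd; split.
- case=> -[|e u] [v [a [b [t [ab t_gt0]]]]] /=; last first.
    by case=> ce _ [de _]; rewrite ce de eqxx in cd.
  rewrite -(prednK t_gt0) !alphaS => -[-> ->] [-> ->].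
  by exists t.-1, v.
- by case=> t [v [-> ->]]; exists [::], v, c, d, t.+1; rewrite !alphaS.
Qed.

End SwappedAlternations.

Section ReadsFrom.
Variables (T : eqType) (f : T -> nat).
Hypothesis f_inj : injective f.

(* R(f x), but with the padding symbol in front of the word equal to p. *)
Fixpoint read2_from (p : nat) (x : seq T) : seq (seq nat) :=
  if x is c :: x' then mset2 p (f c) :: read2_from (f c) x' else [:: mset2 p 0].

Lemma read2_fromE p x :
  let s := p :: map f x ++ [:: 0] in
  mkseq (fun i => mset2 (nth 0 s i) (nth 0 s i.+1)) (size x).+1 = read2_from p x.
Proof. by elim: x p => [|c x IH] p //=; rewrite mkseqSl -IH. Qed.

Lemma size_read2_from p x : size (read2_from p x) = (size x).+1.
Proof. by elim: x p => [|c x IH] p //=; rewrite IH. Qed.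

Lemma read2_from_inj p p' x y :
  read2_from p x = read2_from p' y -> p = p' /\ x = y.
Proof.
elim: x y p p' => [|c x IH] [|d y] p p' /=.
- by case=> /eqP; rewrite eq_mset2r => /eqP.
- by case=> _ /(congr1 size); rewrite size_read2_from.
- by case=> _ /(congr1 size); rewrite size_read2_from.
- case=> E /IH [/f_inj cd <-]; move/eqP: E.
  by rewrite cd eq_mset2r => /eqP ->.
Qed.

Lemma dH_read2_from_eq0 p p' x y :
  size x = size y ->
  (dH (read2_from p x) (read2_from p' y) = 0 <-> p = p' /\ x = y).
Proof.
move=> xy; rewrite (rwP eqP) dH_eq0 ?size_read2_from ?xy //.
by split=> [/eqP/read2_from_inj | [-> ->]].
Qed.

Lemma dH_read2_from_swap a b x y :
  a != b -> size x = size y ->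
  (dH (read2_from (f a) x) (read2_from (f b) y) = 1 <-> alt_swap b a x y).
Proof.
elim: x y a b => [|c x IH] [|d y] a b ab //= => [_ | [xy]].
  by rewrite /dH /= eq_mset2r (inj_eq f_inj) ab; split=> // _; exists 0, [::].
rewrite dH_cons alt_swap_cons.
have [/mset2_eq [[/f_inj ab' _] | [/f_inj <- /f_inj ->]] | neq] /= := eqVneq.
- by rewrite ab' eqxx in ab.
- rewrite add0n IH 1?eq_sym //; split=> [|[[ba _] | [_ _ //]]]; first by right.
  by rewrite ba eqxx in ab.
- rewrite add1n; split=> [[/dH_read2_from_eq0 [] // /f_inj -> ->] | ]; first by left.
  case=> [[-> ->] | [cb da _]]; first by congr _.+1; apply/dH_read2_from_eq0.
  by rewrite cb da mset2C eqxx in neq.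
Qed.

Lemma dH_read2_from_two p x y :
  size x = size y -> (dH (read2_from p x) (read2_from p y) = 2 <-> swap_block x y).
Proof.
elim: x y p => [|c x IH] [|d y] p //= => [_ | [xy]].
  by rewrite /dH /= eqxx; split=> // /swap_block_nil.
rewrite dH_cons eq_mset2l (inj_eq f_inj).
have [<- | cd] := eqVneq c d; first by rewrite swap_block_cons_eq IH.
rewrite swap_block_cons_neq // -(dH_read2_from_swap cd xy) /= add1n.
by split=> [[] | ->].
Qed.

End ReadsFrom.

Lemma read2E q (x : seq 'I_q) : read2 x = read2_from val 0 x.
Proof. exact: read2_fromE. Qed.

Theorem theorem1 (q n : nat) (x y : seq 'I_q) :
  2 <= q -> 1 <= n -> size x = n -> size y = n -> x != y ->
  (dH (read2 x) (read2 y) = 2 <->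
   exists (u v : seq 'I_q) (a b : 'I_q) (t : nat),
     [/\ a != b, 1 <= t,
         x = u ++ alpha t a b ++ v &
         y = u ++ alpha t b a ++ v]).
Proof.
move=> _ _ size_x size_y _; rewrite !read2E.
by apply: dH_read2_from_two; [exact: val_inj | rewrite size_x size_y].
Qed.
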